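(* Let $(\Omega,\mathcal{F},\mathbb{P})$ be an atomless probability space, $\mathrm{B}_b$ the space of bounded real-valued measurable functions on $\Omega$, and $H\colon\mathrm{B}_b\to\mathbb{R}$ a law-invariant premium principle, i.e. $H(X)=H(Y)$ whenever $X,Y\in\mathrm{B}_b$ have the same distribution function under $\mathbb{P}$. Then $R_{\mathrm{Max}}(X):=\inf\{H(X_0)\mid X_0\in\mathrm{B}_b,\ X_0\ge X\}$ is law-invariant.
   Context: A premium principle is a map $H\colon\mathrm{B}_b\to\mathbb{R}$ with $H(X+m)=H(X)+m$ for $m\in\mathbb{R}$, $H(0)=0$, and $H(X)\ge0$ for $X\ge0$, where $\le$ is the pointwise order. The distribution function of $X$ is $z\mapsto\mathbb{P}(X\le z)$. *)

From HB Require Import structures.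
From mathcomp Require Import all_boot all_order all_algebra.
From mathcomp Require Import all_classical all_reals all_analysis.
Set Implicit Arguments. Unset Strict Implicit. Unset Printing Implicit Defensive.
Import Order.TTheory GRing.Theory Num.Theory.
Local Open Scope classical_set_scope.
Local Open Scope ring_scope.

Definition atomless {d : measure_display} {T : measurableType d} {R : realType}
  (P : probability T R) : Prop :=
  forall A : set T, measurable A -> (0 < P A)%E ->
    exists B : set T, [/\ measurable B, B `<=` A, (0 < P B)%E & (P B < P A)%E].

Definition Bb {d : measure_display} {T : measurableType d} {R : realType}
  (X : T -> R) : Prop :=
  measurable_fun setT X /\ exists M : R, forall w, `|X w| <= M.

Definition same_law {d : measure_display} {T : measurableType d} {R : realType}
  (P : probability T R) (X Y : T -> R) : Prop :=
  forall z : R, P [set w | X w <= z] = P [set w | Y w <= z].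

(* Premium principle on B_b (H given on all functions, constrained on B_b) *)
Definition premium_principle {d : measure_display} {T : measurableType d}
  {R : realType} (H : (T -> R) -> R) : Prop :=
  [/\ (forall (X : T -> R) (m : R), Bb X -> H (fun w => X w + m) = H X + m),
      H (fun _ => 0) = 0 &
      (forall X : T -> R, Bb X -> (forall w, 0 <= X w) -> 0 <= H X)].

Definition law_invariant {d : measure_display} {T : measurableType d}
  {R : realType} (P : probability T R) (H : (T -> R) -> R) : Prop :=
  forall X Y : T -> R, Bb X -> Bb Y -> same_law P X Y -> H X = H Y.

Definition R_Max {d : measure_display} {T : measurableType d} {R : realType}
  (H : (T -> R) -> R) (X : T -> R) : \bar R :=
  ereal_inf [set (H X0)%:E | X0 in [set X0 : T -> R | Bb X0 /\ forall w, X w <= X0 w]].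

From HB Require Import structures.
From mathcomp Require Import all_boot all_order all_algebra.
From mathcomp Require Import all_classical all_reals all_analysis.
From mathcomp Require Import ring lra zify.
Import Order.TTheory GRing.Theory Num.Theory.
Local Open Scope classical_set_scope.
Local Open Scope ring_scope.
Set Implicit Arguments. Unset Strict Implicit. Unset Printing Implicit Defensive.

(* If X0 >= X is a candidate in the infimum defining R_Max(X), the distribution
   function G of X0 lies below that of Y, and it suffices to find Z >= Y with
   the law of X0: law invariance of H gives H(Z) = H(X0).  On an atomless space
   there is an increasing family of events (L_t), t in [0, 1], with P(L_t) = t
   lying between {Y < q_t} and {Y <= q_t}, where q is the quantile function of
   Y: atoms {Y = q_t} are split by repeated exact halving, possible by
   Sierpinski's intermediate value theorem for atomless measures.  Then
   Z(w) = inf {z | w in L_(G z)} has distribution function G, and Z >= Y since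
   G <= F_Y forces q_(G z) <= z. *)

Lemma invrS_gt0 (R : numFieldType) (n : nat) : 0 < n.+1%:R^-1 :> R.
Proof. by rewrite invr_gt0 ltr0Sn. Qed.

Lemma lef_invS (R : numFieldType) (n m : nat) :
  (n <= m)%N -> m.+1%:R^-1 <= n.+1%:R^-1 :> R.
Proof. by move=> nm; rewrite lef_pV2 ?posrE ?ltr0Sn // ler_nat. Qed.

Lemma ler_add_invS (R : archiFieldType) (x y : R) :
  (forall n : nat, x <= y + n.+1%:R^-1) -> x <= y.
Proof.
move=> xy; apply/ler_addgt0Pr => e e0; apply: (le_trans (xy (Num.truncn e^-1))).
rewrite lerD2l -[leRHS]invrK lef_pV2 ?posrE ?invr_gt0 ?ltr0Sn //.
exact/ltW/truncnS_gt.
Qed.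

Lemma natr_exp2_gt0 (R : numDomainType) (m : nat) : 0 < (2 ^ m)%:R :> R.
Proof. by rewrite ltr0n expn_gt0. Qed.

Section level_sets.
Variables (d : measure_display) (T : measurableType d) (R : realType).
Variable Y : T -> R.

Lemma eq_setE y : [set w | Y w = y] = [set w | Y w <= y] `\` [set w | Y w < y].
Proof.
apply/seteqP; split => w /=; first by move=> ->; rewrite ltxx.
by move=> [yl /negP]; rewrite -leNgt => ly; apply/eqP; rewrite eq_le yl.
Qed.

Lemma le_set_bigcap y :
  [set w | Y w <= y] = \bigcap_n [set w | Y w <= y + n.+1%:R^-1].
Proof.
apply/seteqP; split => w /=; last by move=> h; apply: ler_add_invS => n; exact: h.
by move=> h n _ /=; apply: (le_trans h); rewrite lerDl ltW // invrS_gt0.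
Qed.

Lemma lt_set_bigcup y :
  [set w | Y w < y] = \bigcup_n [set w | Y w <= y - n.+1%:R^-1].
Proof.
apply/seteqP; split => w /=; last first.
  by move=> [n _ /= h]; apply: (le_lt_trans h); rewrite ltrBlDr ltrDl invrS_gt0.
move=> h; apply: contrapT => nex; move: h; apply/negP; rewrite -leNgt.
apply: ler_add_invS => n; rewrite -lerBlDr leNgt; apply/negP => h.
by apply: nex; exists n => //; exact: ltW.
Qed.

Hypothesis mY : measurable_fun setT Y.

Lemma measurable_le_set y : measurable [set w | Y w <= y].
Proof.
have := mY measurableT (measurable_itv `]-oo, y]); rewrite setTI.
by congr measurable; apply/seteqP; split => w /=; rewrite in_itv.
Qed.

Lemma measurable_lt_set y : measurable [set w | Y w < y].
Proof.
have := mY measurableT (measurable_itv `]-oo, y[); rewrite setTI.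
by congr measurable; apply/seteqP; split => w /=; rewrite in_itv.
Qed.

Lemma measurable_eq_set y : measurable [set w | Y w = y].
Proof.
by rewrite eq_setE; apply: measurableD; [exact: measurable_le_set|exact: measurable_lt_set].
Qed.

End level_sets.

Section nested_family.
Variables (d : measure_display) (T : measurableType d) (R : realType).
Variables (C : R -> set T) (a b : R).
Hypothesis C_mono : forall z z', z <= z' -> C z `<=` C z'.
Hypothesis C_lb : forall z w, C z w -> a <= z.
Hypothesis C_top : forall w, C b w.

Definition entry_level w := inf [set z | C z w].

Lemma entry_level_has_lbound w : has_lbound [set z | C z w].
Proof. by exists a => z; exact: C_lb. Qed.

Lemma le_entry_level x w : (forall z, C z w -> x <= z) -> x <= entry_level w.
Proof. by apply: lb_le_inf; exists b; exact: C_top. Qed.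

Lemma entry_level_bounds w : a <= entry_level w <= b.
Proof.
apply/andP; split; first by apply: le_entry_level => z; exact: C_lb.
by apply: ge_inf; [exact: entry_level_has_lbound|exact: C_top].
Qed.

Lemma entry_level_leE z :
  [set w | entry_level w <= z] = \bigcap_n C (z + n.+1%:R^-1).
Proof.
apply/seteqP; split => w /=; last first.
  move=> h; apply: ler_add_invS => n.
  by rewrite /entry_level ge_inf //; [exact: entry_level_has_lbound|exact: h].
move=> h n _; have lt_zn : entry_level w < z + n.+1%:R^-1.
  by apply: le_lt_trans h _; rewrite ltrDl invrS_gt0.
have [y /= Cy /ltW yz] := inf_lt (ex_intro _ b (C_top w)) lt_zn.
exact: C_mono yz _ Cy.
Qed.

Lemma measurable_entry_level :
  (forall z, measurable (C z)) -> measurable_fun setT entry_level.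
Proof.
move=> mC; apply: (measurability _ (measurable_realfun.RGenOInfty.measurableE R)).
move=> _ [_ [x ->] <-].
have -> : setT `&` entry_level @^-1` `]x, +oo[ = ~` [set w | entry_level w <= x].
  apply/seteqP; split => w /=; rewrite in_itv /= andbT ltNge.
    by move=> [_ /negP].
  by move/negP.
by apply/measurableC; rewrite entry_level_leE; exact: bigcapT_measurable.
Qed.

End nested_family.

Section real_probability.
Variables (d : measure_display) (T : measurableType d) (R : realType).
Variable P : probability T R.

Definition pr (A : set T) : R := fine (P A).

Lemma prE A : measurable A -> P A = (pr A)%:E.
Proof. by move=> mA; rewrite /pr fineK // fin_num_measure. Qed.

Lemma pr_ge0 A : 0 <= pr A.
Proof. by rewrite /pr fine_ge0. Qed.

Lemma pr_le1 A : measurable A -> pr A <= 1.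
Proof. by move=> mA; rewrite -lee_fin -prE // probability_le1. Qed.

Lemma pr0 : pr set0 = 0.
Proof. by rewrite /pr measure0. Qed.

Lemma prT : pr setT = 1.
Proof. by rewrite /pr probability_setT. Qed.

Lemma le_pr A B : measurable A -> measurable B -> A `<=` B -> pr A <= pr B.
Proof. by move=> mA mB AB; rewrite -lee_fin -!prE // le_measure // inE. Qed.

Lemma prU A B : measurable A -> measurable B -> A `&` B = set0 ->
  pr (A `|` B) = pr A + pr B.
Proof.
move=> mA mB AB; apply: EFin_inj.
by rewrite -prE ?measureU ?EFinD -?prE //; exact: measurableU.
Qed.

Lemma prD A B : measurable A -> measurable B -> B `<=` A ->
  pr (A `\` B) = pr A - pr B.
Proof.
move=> mA mB BA; rewrite -[in RHS](setDUK BA) setUC prU ?addrK //.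
- exact: measurableD.
- by rewrite setDE -setIA setICl setI0.
Qed.

Lemma pr_bigcap_ge (F : (set T)^nat) t : (forall n, measurable (F n)) ->
  (forall n m, (n <= m)%N -> F m `<=` F n) ->
  (forall n, t <= pr (F n)) -> t <= pr (\bigcap_n F n).
Proof.
move=> mF dF tF; have mI := bigcapT_measurable mF.
have PF0 : (P (F 0%N) < +oo)%E by rewrite prE ?ltry.
have cv := nonincreasing_cvg_mu PF0 mF mI
  (fun n m nm => introT (subsetPset _ _) (dF n m nm)).
rewrite -lee_fin -prE // -(cvg_lim _ cv) //.
apply: lime_ge; first by apply/cvg_ex; eexists; exact: cv.
by apply: nearW => n /=; rewrite prE // lee_fin.
Qed.

Lemma pr_bigcup_le (F : (set T)^nat) t : (forall n, measurable (F n)) ->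
  (forall n m, (n <= m)%N -> F n `<=` F m) ->
  (forall n, pr (F n) <= t) -> pr (\bigcup_n F n) <= t.
Proof.
move=> mF iF tF; have mU : measurable (\bigcup_n F n) by exact: bigcupT_measurable.
have cv := @nondecreasing_cvg_mu _ _ _ P F mF mU
  (fun n m nm => introT (subsetPset _ _) (iF n m nm)).
rewrite -lee_fin -prE // -(cvg_lim _ cv) //.
apply: lime_le; first by apply/cvg_ex; eexists; exact: cv.
by apply: nearW => n /=; rewrite prE // lee_fin.
Qed.

Lemma le_pr_bigcap (F F' : (set T)^nat) : (forall n, measurable (F n)) ->
  (forall n, measurable (F' n)) -> (forall n m, (n <= m)%N -> F' m `<=` F' n) ->
  (forall n, pr (F n) = pr (F' n)) -> pr (\bigcap_n F n) <= pr (\bigcap_n F' n).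
Proof.
move=> mF mF' dF' FF'; apply: pr_bigcap_ge => // n; rewrite -FF'.
by apply: le_pr => //; [exact: bigcapT_measurable|move=> w; apply].
Qed.

Lemma pr_le_set (Y : T -> R) y : measurable_fun setT Y ->
  pr [set w | Y w <= y] = pr [set w | Y w < y] + pr [set w | Y w = y].
Proof.
move=> mY; rewrite eq_setE prD ?subrKC //.
- exact: measurable_le_set.
- exact: measurable_lt_set.
- by move=> w /= /ltW.
Qed.

End real_probability.

Section greedy.
Variables (d : measure_display) (T : measurableType d) (R : realType).
Variable P : probability T R.
Local Notation pr := (pr P).

Lemma greedy_subset A B t : measurable B -> pr B <= t ->
  let admissible D := [/\ measurable D, D `<=` A `\` B & pr B + pr D <= t] in
  exists2 C, admissible C & forall D, admissible D -> pr D / 2 <= pr C.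
Proof.
move=> mB Bt admissible.
have adm0 : admissible set0 by split => //; rewrite pr0 addr0.
pose S := [set pr D | D in admissible].
have supS : has_sup S.
  split; first by exists 0, set0 => //; rewrite pr0.
  by exists 1 => _ [D [mD _ _] <-]; exact: pr_le1.
have ub D : admissible D -> pr D <= sup S.
  by move=> aD; apply: sup_upper_bound => //; exists D.
have [S_gt0|S_le0] := ltrP 0 (sup S).
  have [_ [C aC <-] lt_C] := sup_adherent (divr_gt0 S_gt0 (ltr0Sn _ 1)) supS.
  by exists C => // D /ub; lra.
by exists set0 => // D /ub; rewrite pr0; lra.
Qed.

Lemma greedy_chain A t : 0 <= t -> exists Bs : (set T)^nat,
  [/\ forall n, [/\ measurable (Bs n), Bs n `<=` A & pr (Bs n) <= t],
      forall n m, (n <= m)%N -> Bs n `<=` Bs m &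
      forall n D, measurable D -> D `<=` A `\` Bs n -> pr (Bs n) + pr D <= t ->
        pr (Bs n) + pr D / 2 <= pr (Bs n.+1)].
Proof.
move=> t0.
have /choice [f fP] : forall B, exists C, measurable B -> pr B <= t ->
    [/\ measurable C, C `<=` A `\` B & pr B + pr C <= t] /\
    forall D, [/\ measurable D, D `<=` A `\` B & pr B + pr D <= t] ->
      pr D / 2 <= pr C.
  move=> B; have [[mB Bt]|nB] := pselect (measurable B /\ pr B <= t).
    by have [C aC maxC] := greedy_subset A mB Bt; exists C.
  by exists set0 => mB Bt; exfalso; exact: nB.
pose Bs n := iter n (fun B => B `|` f B) set0.
have BsS n : Bs n.+1 = Bs n `|` f (Bs n) by [].
have disj B : measurable B -> pr B <= t -> B `&` f B = set0.
  move=> mB Bt; have [[_ fBA _] _] := fP B mB Bt.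
  by apply/seteqP; split => // w [Bw /fBA []].
have BsP n : [/\ measurable (Bs n), Bs n `<=` A & pr (Bs n) <= t].
  elim: n => [|n [mB BA Bt]]; first by split; rewrite //= pr0.
  have [[mC CA Ct] _] := fP (Bs n) mB Bt.
  rewrite BsS prU ?disj //; split => //; first exact: measurableU.
  by move=> w [/BA|/CA []].
exists Bs; split => //.
- move=> n m /subnKC <-; elim: (m - n)%N => [|k IH]; first by rewrite addn0.
  by rewrite addnS BsS; apply: subset_trans IH _; exact: subsetUl.
- move=> n D mD DA Dt; have [mB _ Bt] := BsP n.
  have [[mC _ _] maxC] := fP (Bs n) mB Bt.
  by rewrite BsS prU ?disj // lerD2l; exact: maxC.
Qed.

End greedy.

Section atomless.
Variables (d : measure_display) (T : measurableType d) (R : realType).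
Variable P : probability T R.
Hypothesis P_atomless : atomless P.
Local Notation pr := (pr P).

Lemma atomless_le_half B : measurable B -> 0 < pr B ->
  exists C, [/\ measurable C, C `<=` B, 0 < pr C & pr C <= pr B / 2].
Proof.
move=> mB B_gt0; have PB_gt0 : (0 < P B)%E by rewrite prE // lte_fin.
have [C [mC CB]] := P_atomless mB PB_gt0; rewrite !prE // !lte_fin => C_gt0 CB_lt.
have [C_le|C_gt] := lerP (pr C) (pr B / 2); first by exists C.
exists (B `\` C); split; first exact: measurableD.
- by move=> w [].
- by rewrite prD // subr_gt0.
- rewrite prD //; lra.
Qed.

Lemma atomless_small A e : measurable A -> 0 < pr A -> 0 < e ->
  exists B, [/\ measurable B, B `<=` A, 0 < pr B & pr B <= e].
Proof.
move=> mA A_gt0 e_gt0.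
have halvings n : exists B,
    [/\ measurable B, B `<=` A, 0 < pr B & pr B * (2 ^ n)%:R <= pr A].
  elim: n => [|n [B [mB BA B_gt0 Bn]]]; first by exists A; split; rewrite // mulr1.
  have [C [mC CB C_gt0 C_le]] := atomless_le_half mB B_gt0.
  exists C; split => //; first exact: subset_trans CB BA.
  rewrite expnS natrM mulrA; apply: le_trans Bn; rewrite ler_wpM2r //; lra.
pose n := Num.truncn e^-1.
have [B [mB BA B_gt0 Bn]] := halvings n.
exists B; split => //.
have n_exp : n.+1%:R <= (2 ^ n)%:R :> R by rewrite ler_nat ltn_expl.
have e_exp : 1 < e * (2 ^ n)%:R.
  by rewrite -ltr_pdivrMl // mulr1 (lt_le_trans (truncnS_gt _)).
have := pr_le1 P mA; nra.
Qed.

Lemma atomless_sierpinski A t : measurable A -> 0 <= t -> t <= pr A ->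
  exists B, [/\ measurable B, B `<=` A & pr B = t].
Proof.
move=> mA t0 tA; have [Bs [BsP Bs_mono Bs_step]] := greedy_chain P A t0.
pose B := \bigcup_n Bs n.
have mB : measurable B by apply: bigcupT_measurable => n; case: (BsP n).
have BA : B `<=` A by move=> w [n _]; case: (BsP n) => _ + _; apply.
have Bt : pr B <= t by apply: pr_bigcup_le => // n; case: (BsP n).
exists B; split => //; apply/eqP; rewrite eq_le Bt /= leNgt; apply/negP => Bt_lt.
have [D [mD DAB D_gt0 Dt]] : exists D,
    [/\ measurable D, D `<=` A `\` B, 0 < pr D & pr D <= t - pr B].
  apply: atomless_small; first exact: measurableD.
    by rewrite prD // subr_gt0; exact: lt_le_trans tA.
  by rewrite subr_gt0.
have grow n : n%:R * (pr D / 2) <= pr (Bs n).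
  elim: n => [|n IH]; first by rewrite mul0r pr_ge0.
  have [mBn BnA _] := BsP n.
  have BnB : pr (Bs n) <= pr B by apply: le_pr => // w ?; exists n.
  have DABn : D `<=` A `\` Bs n.
    by move=> w /DAB [Aw nBw]; split => // Bnw; apply: nBw; exists n.
  have Bn_adm : pr (Bs n) + pr D <= t by lra.
  have := Bs_step n D mD DABn Bn_adm.
  rewrite -[n.+1%:R]natr1 mulrDl mul1r; lra.
pose N := (Num.truncn (2 / pr D)).+1.
have := truncnS_gt (2 / pr D); rewrite ltr_pdivrMr // -/N => N_gt.
have := grow N; have [mBN _ _] := BsP N; have := pr_le1 P mBN; nra.
Qed.

Lemma atomless_halving : exists half : set T -> set T, forall D, measurable D ->
  [/\ measurable (half D), half D `<=` D & pr (half D) = pr D / 2].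
Proof.
have /choice [half halfP] : forall D, exists E, measurable D ->
    [/\ measurable E, E `<=` D & pr E = pr D / 2].
  move=> D; have [mD|] := pselect (measurable D); last by exists set0.
  have [E EP] : exists E, [/\ measurable E, E `<=` D & pr E = pr D / 2].
    by apply: atomless_sierpinski => //; have := pr_ge0 P D; lra.
  by exists E.
by exists half.
Qed.

End atomless.

Section dyadic.
Variables (d : measure_display) (T : measurableType d) (R : realType).
Variables (P : probability T R) (half : set T -> set T).
Local Notation pr := (pr P).
Hypothesis halfP : forall D, measurable D ->
  [/\ measurable (half D), half D `<=` D & pr (half D) = pr D / 2].

Definition mid A C := A `|` half (C `\` A).

Lemma midP A C : measurable A -> measurable C -> A `<=` C ->
  [/\ measurable (mid A C), A `<=` mid A C, mid A C `<=` C &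
      pr (mid A C) = (pr A + pr C) / 2].
Proof.
move=> mA mC AC; have mCA := measurableD mC mA.
have [mH HC pH] := halfP mCA.
split; first exact: measurableU.
- exact: subsetUl.
- by move=> w [/AC|/HC []].
- rewrite /mid prU ?pH ?prD //; first lra.
  by apply/seteqP; split => w // [Aw /HC []].
Qed.

Lemma mid_id C : measurable C -> mid C C = C.
Proof.
move=> mC; apply/seteqP; split => w; last exact: subsetUl.
by have [_ HC _] := halfP (measurableD mC mC); case=> // /HC [].
Qed.

(* Even indices at level [n.+1] repeat level [n]; odd ones insert midpoints. *)
Fixpoint dyadic_set (S : set T) (n k : nat) : set T :=
  if n is n'.+1 then
    if odd k then mid (dyadic_set S n' k./2) (dyadic_set S n' k./2.+1)
    else dyadic_set S n' k./2
  else if k == 0%N then set0 else S.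

Lemma dyadic_set_double S n j : dyadic_set S n.+1 j.*2 = dyadic_set S n j.
Proof. by rewrite /= odd_double half_double. Qed.

Lemma dyadic_set_doubleS S n j :
  dyadic_set S n.+1 j.*2.+1 = mid (dyadic_set S n j) (dyadic_set S n j.+1).
Proof. by rewrite /= odd_double /= uphalf_double. Qed.

Lemma dyadic_setP S : measurable S -> forall n k,
  [/\ measurable (dyadic_set S n k), dyadic_set S n k `<=` S,
      dyadic_set S n k `<=` dyadic_set S n k.+1,
      (2 ^ n <= k)%N -> dyadic_set S n k = S &
      (k <= 2 ^ n)%N -> pr (dyadic_set S n k) = k%:R / (2 ^ n)%:R * pr S].
Proof.
move=> mS; elim=> [|n IH] k.
  case: k => [|[|k]] /=; first by split; rewrite // pr0 !mul0r.
    by split; rewrite // expn0 divr1 mul1r.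
  by split.
have q_neq0 : (2 ^ n)%:R != 0 :> R by rewrite pnatr_eq0 expn_eq0.
have [j k_eq] : exists j, k = j.*2 \/ k = j.*2.+1.
  by exists k./2; rewrite -{1 3}(odd_double_half k); case: (odd k); [right|left].
have [mB BS BB BT Bp] := IH j; have [mB' BS' BB' BT' Bp'] := IH j.+1.
have [mM BM MB' pM] := midP mB mB' BB.
case: k_eq => ->.
- rewrite dyadic_set_double -[j.*2.+1]/(j.*2.+1) dyadic_set_doubleS.
  split => //.
  + by move=> h; apply: BT; move: h; rewrite expnS; lia.
  + move=> h; rewrite Bp; last by move: h; rewrite expnS; lia.
    by rewrite -muln2 natrM expnS natrM; field.
- rewrite dyadic_set_doubleS -[j.*2.+2]/(j.+1.*2) dyadic_set_double.
  split => //; first exact: subset_trans MB' BS'.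
  + by move=> h; rewrite BT ?BT' ?mid_id //; move: h; rewrite expnS; lia.
  + move=> h; rewrite pM Bp ?Bp'; try by move: h; rewrite expnS; lia.
    rewrite -[j.+1%:R]natr1 -[j.*2.+1%:R]natr1 -muln2 natrM expnS natrM.
    by field.
Qed.

Lemma dyadic_set_scale S n m k :
  dyadic_set S n k = dyadic_set S (n + m) (k * 2 ^ m).
Proof.
elim: m => [|m IH]; first by rewrite addn0 expn0 muln1.
by rewrite addnS expnS mulnCA mul2n dyadic_set_double -IH.
Qed.

Lemma dyadic_set_mono S : measurable S -> forall n k k', (k <= k')%N ->
  dyadic_set S n k `<=` dyadic_set S n k'.
Proof.
move=> mS n k k' /subnKC <-; elim: (k' - k)%N => [|i IH]; first by rewrite addn0.
by apply: (subset_trans IH); rewrite addnS; have [] := dyadic_setP mS n (k + i).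
Qed.

Lemma dyadic_set_sub S : measurable S -> forall m j n k,
  (j * 2 ^ n <= k * 2 ^ m)%N -> dyadic_set S m j `<=` dyadic_set S n k.
Proof.
move=> mS m j n k h; rewrite (dyadic_set_scale S m n) (dyadic_set_scale S n m) addnC.
exact: dyadic_set_mono.
Qed.

Lemma pr_dyadic_set_le S : measurable S -> forall n k,
  pr (dyadic_set S n k) <= k%:R / (2 ^ n)%:R * pr S.
Proof.
move=> mS n k; have [_ _ _ BT Bp] := dyadic_setP mS n k.
have [k_le|/ltnW k_gt] := leqP k (2 ^ n); first by rewrite Bp.
rewrite BT // -[leLHS]mul1r ler_wpM2r ?pr_ge0 //.
by rewrite ler_pdivlMr ?natr_exp2_gt0 // mul1r ler_nat.
Qed.

Definition portion S (s : R) := \bigcup_n dyadic_set S n (Num.truncn (s * (2 ^ n)%:R)).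

Lemma measurable_portion S s : measurable S -> measurable (portion S s).
Proof.
by move=> mS; apply: bigcupT_measurable => n; have [] := dyadic_setP mS n (Num.truncn (s * (2 ^ n)%:R)).
Qed.

Lemma portion_sub S s : measurable S -> portion S s `<=` S.
Proof.
by move=> mS w [n _]; have [_ + _ _ _] := dyadic_setP mS n (Num.truncn (s * (2 ^ n)%:R)); apply.
Qed.

Lemma portion_mono S s s' : measurable S -> s <= s' -> portion S s `<=` portion S s'.
Proof.
move=> mS ss w [n _ Hw]; exists n => //; move: w Hw; apply: dyadic_set_mono => //.
by apply: le_truncn; rewrite ler_wpM2r // ltW // natr_exp2_gt0.
Qed.

Lemma portion_sub_dyadic_set S s m : measurable S -> 0 <= s ->
  portion S s `<=` dyadic_set S m (Num.truncn (s * (2 ^ m)%:R)).+1.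
Proof.
move=> mS s0 w [n _]; apply: dyadic_set_sub => //; apply: ltnW.
rewrite -(ltr_nat R) !natrM; apply: (@le_lt_trans _ _ (s * (2 ^ n)%:R * (2 ^ m)%:R)).
  by apply: ler_wpM2r; [exact: ler0n|rewrite truncn_le mulr_ge0 ?ler0n].
by rewrite mulrAC ltr_pM2r ?natr_exp2_gt0 // truncnS_gt.
Qed.

Lemma pr_portion S s : measurable S -> 0 <= s -> s <= 1 ->
  pr (portion S s) = s * pr S.
Proof.
move=> mS s0 s1; pose k m := Num.truncn (s * (2 ^ m)%:R).
have mW := measurable_portion s mS.
have [S0 S1] := (pr_ge0 P S, pr_le1 P mS).
have k_bounds m : (k m)%:R / (2 ^ m)%:R <= s < (k m)%:R / (2 ^ m)%:R + (2 ^ m)%:R^-1.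
  have q_gt0 := natr_exp2_gt0 R m.
  rewrite ler_pdivrMr // truncn_le mulr_ge0 ?ler0n //=.
  by rewrite -[X in _ < _ + X]mul1r -mulrDl natr1 ltr_pdivlMr // truncnS_gt.
have vS m : (2 ^ m)%:R^-1 * pr S <= m.+1%:R^-1.
  apply: (@le_trans _ _ (2 ^ m)%:R^-1); first by rewrite ler_piMr // invr_ge0 ler0n.
  by rewrite lef_pV2 ?posrE ?natr_exp2_gt0 ?ltr0Sn // ler_nat ltn_expl.
apply/eqP; rewrite eq_le; apply/andP; split; apply: ler_add_invS => m.
- have /andP[/(ler_wpM2r S0) uS _] := k_bounds m.
  have [mB _ _ _ _] := dyadic_setP mS m (k m).+1.
  have WB := le_pr P mW mB (portion_sub_dyadic_set m mS s0).
  have := pr_dyadic_set_le mS m (k m).+1.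
  rewrite -[(k m).+1%:R]natr1 mulrDl mul1r mulrDl => Bk.
  exact: le_trans WB (le_trans Bk (lerD uS (vS m))).
- have /andP[_ /ltW/(ler_wpM2r S0)] := k_bounds m; rewrite mulrDl => sS.
  have [mB _ _ _ Bp] := dyadic_setP mS m (k m).
  have BW : pr (dyadic_set S m (k m)) <= pr (portion S s).
    by apply: le_pr => // w Bw; exists m.
  rewrite Bp in BW; first exact: le_trans sS (lerD BW (vS m)).
  rewrite -[X in (_ <= X)%N](@natrK R); apply: le_truncn.
  by rewrite -[leRHS]mul1r ler_wpM2r // ltW // natr_exp2_gt0.
Qed.

Section quantile.
Variables (Y : T -> R) (M : R).
Hypothesis mY : measurable_fun setT Y.
Hypothesis Y_bound : forall w, `|Y w| <= M.
Hypothesis M_ge0 : 0 <= M.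

Lemma Y_ge w : - M <= Y w.
Proof. by have := Y_bound w; rewrite ler_norml => /andP[]. Qed.

Lemma Y_le w : Y w <= M.
Proof. by have := Y_bound w; rewrite ler_norml => /andP[]. Qed.

Lemma le_oppM : - M <= M.
Proof. by rewrite (le_trans _ M_ge0) // oppr_le0. Qed.

(* The lower bound [- M] keeps the infimum finite at [t = 0]. *)
Definition quantile_set t := [set y | - M <= y /\ t <= pr [set w | Y w <= y]].

Definition quantile t := inf (quantile_set t).

Lemma quantile_has_lbound t : has_lbound (quantile_set t).
Proof. by exists (- M) => y []. Qed.

Lemma quantile_set_neq0 t : t <= 1 -> quantile_set t !=set0.
Proof.
move=> t1; exists M; split; first exact: le_oppM.
suff -> : [set w | Y w <= M] = setT by rewrite prT.
by apply/seteqP; split => w // _; exact: Y_le.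
Qed.

Lemma quantile_le t z : - M <= z -> t <= pr [set w | Y w <= z] -> quantile t <= z.
Proof. by move=> Mz tz; apply: ge_inf; [exact: quantile_has_lbound|split]. Qed.

Lemma le_quantile t t' : t <= t' -> t' <= 1 -> quantile t <= quantile t'.
Proof.
move=> tt' t'1; apply: lb_le_inf; first exact: quantile_set_neq0.
by move=> y [My t'y]; apply: quantile_le => //; exact: le_trans t'y.
Qed.

Lemma pr_le_quantile_ge t : t <= 1 -> t <= pr [set w | Y w <= quantile t].
Proof.
move=> t1; rewrite le_set_bigcap; apply: pr_bigcap_ge.
- by move=> n; exact: measurable_le_set.
- move=> n m nm w /= /le_trans; apply.
  by rewrite lerD2l lef_invS.
- move=> n; have lt_n : quantile t < quantile t + n.+1%:R^-1.
    by rewrite ltrDl invrS_gt0.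
  have [y [_ ty] /ltW yq] := inf_lt (quantile_set_neq0 t1) lt_n.
  apply: (le_trans ty); apply: le_pr; try exact: measurable_le_set.
  by move=> w /= /le_trans; apply.
Qed.

Lemma pr_lt_quantile_le t : 0 <= t -> t <= 1 ->
  pr [set w | Y w < quantile t] <= t.
Proof.
move=> t0 t1; rewrite lt_set_bigcup; apply: pr_bigcup_le.
- by move=> n; exact: measurable_le_set.
- move=> n m nm w /= /le_trans; apply.
  by rewrite lerD2l lerN2 lef_invS.
- move=> n; have [q_lt|M_le] := ltrP (quantile t - n.+1%:R^-1) (- M).
    suff -> : [set w | Y w <= quantile t - n.+1%:R^-1] = set0 by rewrite pr0.
    by apply/seteqP; split => w //= /le_lt_trans/(_ q_lt); rewrite ltNge Y_ge.
  rewrite leNgt; apply/negP => /ltW /(quantile_le M_le).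
  by rewrite leNgt ltrBlDr ltrDl invrS_gt0.
Qed.

(* When the atom [Y = quantile t] is null, [x / 0 = 0] makes [atom_frac t = 0]. *)
Definition atom_frac t :=
  (t - pr [set w | Y w < quantile t]) / pr [set w | Y w = quantile t].

Definition lower_set t := [set w | Y w < quantile t] `|`
  portion [set w | Y w = quantile t] (atom_frac t).

Lemma atom_fracP t : 0 <= t -> t <= 1 ->
  [/\ 0 <= atom_frac t, atom_frac t <= 1 &
      pr [set w | Y w < quantile t] +
        atom_frac t * pr [set w | Y w = quantile t] = t].
Proof.
move=> t0 t1; have := pr_le_quantile_ge t1; have := pr_lt_quantile_le t0 t1.
rewrite (pr_le_set _ _ mY) /atom_frac.
have := pr_ge0 P [set w | Y w = quantile t].
set a := pr [set w | _ < _]; set b := pr [set w | _ = _] => b0 a_le b_ge.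
have [b_eq|b_neq0] := eqVneq b 0.
  by rewrite b_eq invr0 mulr0 mul0r; split; lra.
have b_gt0 : 0 < b by rewrite lt_neqAle eq_sym b_neq0.
rewrite divr_ge0 ?subr_ge0 // ler_pdivrMr // divfK //; split; lra.
Qed.

Lemma measurable_lower_set t : measurable (lower_set t).
Proof.
apply: measurableU; first exact: measurable_lt_set.
by apply: measurable_portion; exact: measurable_eq_set.
Qed.

Lemma pr_lower_set t : 0 <= t -> t <= 1 -> pr (lower_set t) = t.
Proof.
move=> t0 t1; have [s0 s1 frac_eq] := atom_fracP t0 t1.
have mE := measurable_eq_set mY (quantile t).
rewrite /lower_set prU ?pr_portion //.
- exact: measurable_lt_set.
- exact: measurable_portion.
- apply/seteqP; split => w // [/= lt_w /(portion_sub mE) /= eq_w].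
  by move: lt_w; rewrite eq_w ltxx.
Qed.

Lemma lower_set_sub t : lower_set t `<=` [set w | Y w <= quantile t].
Proof.
move=> w [/= /ltW //|]; have mE := measurable_eq_set mY (quantile t).
by move=> /(portion_sub mE) /= ->.
Qed.

Lemma lower_set_mono t t' : 0 <= t -> t <= t' -> t' <= 1 ->
  lower_set t `<=` lower_set t'.
Proof.
move=> t0 tt' t'1; have := le_quantile tt' t'1.
rewrite le_eqVlt => /orP[/eqP q_eq|q_lt].
  rewrite /lower_set /atom_frac q_eq; apply: setUS; apply: portion_mono.
    exact: measurable_eq_set.
  by rewrite ler_wpM2r ?invr_ge0 ?pr_ge0 // lerD2r.
by move=> w /lower_set_sub /= Yq; left => /=; exact: le_lt_trans q_lt.
Qed.

Section coupling.
Variable X0 : T -> R.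
Hypothesis mX0 : measurable_fun setT X0.
Hypothesis X0_bound : forall w, `|X0 w| <= M.
Hypothesis X0_dom : forall z, pr [set w | X0 w <= z] <= pr [set w | Y w <= z].

(* The clamps make the entry level of every point lie in [[- M, M]]. *)
Definition coupling_set z :=
  if z < - M then set0 else if M <= z then setT
  else lower_set (pr [set w | X0 w <= z]).

Lemma measurable_coupling_set z : measurable (coupling_set z).
Proof.
by rewrite /coupling_set; case: ifP => // _; case: ifP => // _; exact: measurable_lower_set.
Qed.

Lemma coupling_set_lb z w : coupling_set z w -> - M <= z.
Proof. by rewrite /coupling_set; case: ltrP. Qed.

Lemma coupling_set_top w : coupling_set M w.
Proof. by rewrite /coupling_set lexx ltNge le_oppM. Qed.

Lemma coupling_set_mono z z' : z <= z' -> coupling_set z `<=` coupling_set z'.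
Proof.
move=> zz'; rewrite /coupling_set; case: ltrP => [_|Mz]; first exact: sub0set.
rewrite ltNge (le_trans Mz zz') /=; case: ifPn => [/le_trans/(_ zz') -> //|_].
case: ifPn => // _; apply: lower_set_mono; first exact: pr_ge0.
- by apply: le_pr; try exact: measurable_le_set; move=> w /= /le_trans; apply.
- exact/pr_le1/measurable_le_set.
Qed.

Lemma pr_coupling_set z : pr (coupling_set z) = pr [set w | X0 w <= z].
Proof.
rewrite /coupling_set; case: ltrP => [zM|Mz].
  suff -> : [set w | X0 w <= z] = set0 by [].
  apply/seteqP; split => w //= X0z; move: (X0_bound w); rewrite ler_norml.
  by move=> /andP[/le_trans/(_ X0z)]; rewrite leNgt zM.
case: ifPn => [Mz'|_].
  suff -> : [set w | X0 w <= z] = setT by [].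
  apply/seteqP; split => w // _ /=; move: (X0_bound w); rewrite ler_norml.
  by move=> /andP[_ /le_trans]; apply.
apply: pr_lower_set; first exact: pr_ge0.
exact/pr_le1/measurable_le_set.
Qed.

Lemma coupling_set_sub z : coupling_set z `<=` [set w | Y w <= z].
Proof.
rewrite /coupling_set; case: ltrP => [_|Mz]; first exact: sub0set.
case: ifPn => [Mz' w _|_ w /lower_set_sub /= Yq]; first exact: le_trans (Y_le w) Mz'.
exact: le_trans Yq (quantile_le Mz (X0_dom z)).
Qed.

Lemma coupling_above : exists Z, [/\ Bb Z, forall w, Y w <= Z w & same_law P Z X0].
Proof.
pose Z := entry_level coupling_set.
have Z_bounds := entry_level_bounds coupling_set_lb coupling_set_top.
have Z_leE := entry_level_leE coupling_set_mono coupling_set_lb coupling_set_top.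
have mZ : measurable_fun setT Z := measurable_entry_level coupling_set_mono
  coupling_set_lb coupling_set_top measurable_coupling_set.
exists Z; split.
- by split => //; exists M => w; rewrite ler_norml Z_bounds.
- by move=> w; apply: (le_entry_level coupling_set_top) => z /coupling_set_sub.
- move=> z; rewrite (prE P (measurable_le_set mZ z)) (prE P (measurable_le_set mX0 z)).
  congr EFin; rewrite Z_leE (le_set_bigcap X0); apply/eqP; rewrite eq_le.
  have mX0n n := measurable_le_set mX0 (z + n.+1%:R^-1).
  have mCn n := measurable_coupling_set (z + n.+1%:R^-1).
  apply/andP; split; apply: le_pr_bigcap => // n.
  + by move=> m nm w /= /le_trans; apply; rewrite lerD2l lef_invS.
  + exact: pr_coupling_set.
  + by move=> m nm; apply: coupling_set_mono; rewrite lerD2l lef_invS.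
  + by rewrite pr_coupling_set.
Qed.

End coupling.
End quantile.
End dyadic.

Lemma atomless_coupling_above (d : measure_display) (T : measurableType d)
    (R : realType) (P : probability T R) (Y X0 : T -> R) :
  atomless P -> Bb Y -> Bb X0 ->
  (forall z, pr P [set w | X0 w <= z] <= pr P [set w | Y w <= z]) ->
  exists Z, [/\ Bb Z, forall w, Y w <= Z w & same_law P Z X0].
Proof.
move=> P_atomless [mY [MY Y_bound]] [mX0 [MX0 X0_bound]] X0_dom.
have [half halfP] := atomless_halving P_atomless.
have M_ge0 : 0 <= `|MY| + `|MX0| by rewrite addr_ge0.
apply: (coupling_above halfP mY _ M_ge0 mX0 _ X0_dom) => w.
- by rewrite (le_trans (Y_bound w)) // (le_trans (ler_norm MY)) // lerDl.
- by rewrite (le_trans (X0_bound w)) // (le_trans (ler_norm MX0)) // lerDr.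
Qed.

Lemma le_R_Max (d : measure_display) (T : measurableType d) (R : realType)
    (P : probability T R) (H : (T -> R) -> R) (X Y : T -> R) :
  atomless P -> law_invariant P H -> Bb X -> Bb Y -> same_law P X Y ->
  (R_Max H Y <= R_Max H X)%E.
Proof.
move=> P_atomless H_law [mX _] bY XY; apply: ereal_inf_le_tmp.
move=> _ [X0 [bX0 XX0] <-]; have [mX0 _] := bX0.
have X0_dom z : pr P [set w | X0 w <= z] <= pr P [set w | Y w <= z].
  have -> : pr P [set w | Y w <= z] = pr P [set w | X w <= z] by rewrite /pr XY.
  apply: le_pr; [exact: measurable_le_set..|].
  by move=> w /= /(le_trans (XX0 w)).
have [Z [bZ YZ ZX0]] := atomless_coupling_above P_atomless bY bX0 X0_dom.
by exists Z => //; rewrite (H_law Z X0).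
Qed.

Theorem proposition4p3 (d : measure_display) (T : measurableType d) (R : realType)
  (P : probability T R) (H : (T -> R) -> R) :
  atomless P -> premium_principle H -> law_invariant P H ->
  forall X Y : T -> R, Bb X -> Bb Y -> same_law P X Y -> R_Max H X = R_Max H Y.
Proof.
move=> P_atomless _ H_law X Y bX bY XY.
have YX : same_law P Y X by move=> z; rewrite XY.
apply/eqP; rewrite eq_le (le_R_Max P_atomless H_law bX bY XY).
by rewrite (le_R_Max P_atomless H_law bY bX YX).
Qed.
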